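(* Let $S$ be a complete metric space with distance $d$, and let $\preceq$ be a topological orientation on $S$. Assume that every right-bounded pair in $S$ has a join, and that $h:S\to\mathbb{R}$ is continuous and a discriminator. Then $(S,\preceq)$ is a cc sponge.
   Context: An orientation on $S$ is a reflexive, antisymmetric binary relation $\preceq$; it is a topological orientation if $\preceq$ is a closed subset of $S\times S$. For $P\subseteq S$: $P$ is right-bounded if some $s\in S$ has $p\preceq s$ for all $p\in P$. The join of $P$ is an element $x$ with $p\preceq x$ for all $p\in P$ and $x\preceq y$ for every $y$ with $p\preceq y$ for all $p\in P$. $(S,\preceq)$ is a cc sponge if every nonempty right-bounded subset has a join. A function $h:S\to\mathbb{R}$ is a discriminator if for every $\varepsilon>0$ there is $\delta>0$ such that for all $x,y\in S$, $x\preceq y$ and $h(y)<h(x)+\delta$ imply $d(x,y)<\varepsilon$. *)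

From Stdlib Require Import Reals.
Open Scope R_scope.

Definition is_metric {S : Type} (d : S -> S -> R) : Prop :=
  (forall x y, 0 <= d x y) /\
  (forall x y, d x y = 0 <-> x = y) /\
  (forall x y, d x y = d y x) /\
  (forall x y z, d x z <= d x y + d y z).

Definition cauchy_seq {S : Type} (d : S -> S -> R) (u : nat -> S) : Prop :=
  forall eps, 0 < eps -> exists N, forall m n, (N <= m)%nat -> (N <= n)%nat ->
    d (u m) (u n) < eps.

Definition seq_converges_to {S : Type} (d : S -> S -> R) (u : nat -> S) (l : S) : Prop :=
  forall eps, 0 < eps -> exists N, forall n, (N <= n)%nat -> d (u n) l < eps.

Definition complete_metric {S : Type} (d : S -> S -> R) : Prop :=
  forall u, cauchy_seq d u -> exists l, seq_converges_to d u l.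

Definition metric_continuous {S : Type} (d : S -> S -> R) (h : S -> R) : Prop :=
  forall x eps, 0 < eps -> exists delta, 0 < delta /\
    forall y, d x y < delta -> Rabs (h y - h x) < eps.

Definition orientation {S : Type} (le : S -> S -> Prop) : Prop :=
  (forall x, le x x) /\ (forall x y, le x y -> le y x -> x = y).

(* the relation le is a closed subset of S x S (product of metric topologies):
   its complement is open, i.e. contains a product of balls around each of its points *)
Definition closed_rel {S : Type} (d : S -> S -> R) (le : S -> S -> Prop) : Prop :=
  forall x y, ~ le x y -> exists r, 0 < r /\
    forall x' y', d x x' < r -> d y y' < r -> ~ le x' y'.

Definition topological_orientation {S : Type} (d : S -> S -> R)
  (le : S -> S -> Prop) : Prop := orientation le /\ closed_rel d le.

Definition right_bounded {S : Type} (le : S -> S -> Prop) (P : S -> Prop) : Prop :=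
  exists s, forall p, P p -> le p s.

Definition is_join {S : Type} (le : S -> S -> Prop) (P : S -> Prop) (x : S) : Prop :=
  (forall p, P p -> le p x) /\
  (forall y, (forall p, P p -> le p y) -> le x y).

Definition cc_sponge {S : Type} (le : S -> S -> Prop) : Prop :=
  forall P : S -> Prop, (exists p, P p) -> right_bounded le P ->
    exists x, is_join le P x.

Definition discriminator {S : Type} (d : S -> S -> R) (le : S -> S -> Prop)
  (h : S -> R) : Prop :=
  forall eps, 0 < eps -> exists delta, 0 < delta /\
    forall x y, le x y -> h y < h x + delta -> d x y < eps.

Definition pair_set {S : Type} (a b : S) : S -> Prop := fun p => p = a \/ p = b.

(* Let U be the set of upper bounds of P and L the set of points lying below
   every element of U; L contains P and, by the pair hypothesis, is directed.
   The discriminator makes h strictly increasing along the orientation, so h is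
   bounded on L by h at any upper bound, and a sequence in L along which h tends
   to sup h(L) is Cauchy: two terms have a join in L, whose h-value cannot
   exceed theirs by much.  Its limit lies in L because the orientation is
   closed, and maximises h on L by continuity.  A maximiser of h on a directed
   set is its greatest element, and the greatest element of L is the join of P. *)

From Stdlib Require Import Reals.
From Stdlib Require Import Lra Lia Classical ClassicalEpsilon.
Open Scope R_scope.

Lemma eventually_inv_INR_succ_lt (eps : R) :
  0 < eps -> exists N, forall n, (N <= n)%nat -> / (INR n + 1) < eps.
Proof.
  intros Heps. destruct (archimed_cor1 eps Heps) as [N [HN HN0]].
  exists N. intros n Hn.
  apply Rle_lt_trans with (/ INR N); [|exact HN].
  apply Rinv_le_contravar.
  - apply lt_0_INR; lia.
  - apply le_INR in Hn. lra.
Qed.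

Definition directed {S : Type} (le : S -> S -> Prop) (A : S -> Prop) : Prop :=
  forall x y, A x -> A y -> exists z, A z /\ le x z /\ le y z.

Definition seq_closed {S : Type} (d : S -> S -> R) (A : S -> Prop) : Prop :=
  forall u l, (forall n, A (u n)) -> seq_converges_to d u l -> A l.

Definition upper_bound {S : Type} (le : S -> S -> Prop) (P : S -> Prop) (u : S) : Prop :=
  forall p, P p -> le p u.

Definition below_upper_bounds {S : Type} (le : S -> S -> Prop) (P : S -> Prop)
  (x : S) : Prop :=
  forall u, upper_bound le P u -> le x u.

Lemma maximizing_sequence {S : Type} (h : S -> R) (A : S -> Prop) (b : R) :
  (exists x, A x) -> (forall x, A x -> h x <= b) ->
  exists M u, (forall x, A x -> h x <= M) /\
    forall n, A (u n) /\ M - / (INR n + 1) < h (u n).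
Proof.
  intros [x0 Hx0] Hb.
  set (E := fun r => exists x, A x /\ r = h x).
  assert (HE_bound : bound E) by (exists b; intros r [x [Hx ->]]; auto).
  assert (HE_ne : exists r, E r) by (exists (h x0), x0; auto).
  destruct (completeness E HE_bound HE_ne) as [M [HM_ub HM_least]].
  assert (Happrox : forall n : nat, exists x, A x /\ M - / (INR n + 1) < h x).
  { intro n. apply NNPP. intro Hnone.
    assert (M <= M - / (INR n + 1)).
    { apply HM_least. intros r [x [Hx ->]].
      apply Rnot_lt_le. intro Hlt. apply Hnone. exists x. auto. }
    assert (0 < / (INR n + 1)) by (apply Rinv_0_lt_compat; pose proof (pos_INR n); lra).
    lra. }
  destruct (choice _ Happrox) as [u Hu].
  exists M, u. split; [|exact Hu].
  intros x Hx. apply HM_ub. exists x. auto.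
Qed.

Section Discriminator.

Context {S : Type} {d : S -> S -> R} {le : S -> S -> Prop} {h : S -> R}.
Hypothesis Hd : is_metric d.
Hypothesis Hdisc : discriminator d le h.

Lemma discriminator_eq x y : le x y -> h y <= h x -> x = y.
Proof.
  intros Hxy Hh. destruct Hd as (Hd0 & Hd_eq0 & _).
  apply Hd_eq0.
  destruct (Rle_lt_or_eq_dec 0 (d x y) (Hd0 x y)) as [Hpos|]; [|auto].
  destruct (Hdisc (d x y) Hpos) as [delta [Hdelta Hsmall]].
  specialize (Hsmall x y Hxy). lra.
Qed.

Lemma discriminator_monotone x y : le x y -> h x <= h y.
Proof.
  intros Hxy. apply Rnot_lt_le. intro Hlt.
  assert (x = y) by (apply discriminator_eq; auto; lra).
  subst. lra.
Qed.

Lemma directed_argmax_greatest (A : S -> Prop) l :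
  directed le A -> A l -> (forall x, A x -> h x <= h l) -> forall x, A x -> le x l.
Proof.
  intros Hdir Hl Hmax x Hx.
  destruct (Hdir l x Hl Hx) as [z [Hz [Hlz Hxz]]].
  assert (l = z) by (apply discriminator_eq; auto).
  subst. exact Hxz.
Qed.

(* Two terms of the sequence have a join z in A with h z <= M, so each is
   within the discriminator's tolerance of z. *)
Lemma maximizing_seq_cauchy (A : S -> Prop) M u :
  directed le A -> (forall x, A x -> h x <= M) ->
  (forall n, A (u n) /\ M - / (INR n + 1) < h (u n)) -> cauchy_seq d u.
Proof.
  intros Hdir HM Hu eps Heps. destruct Hd as (_ & _ & Hsym & Htri).
  destruct (Hdisc (eps / 2)) as [delta [Hdelta Hclose]]; [lra|].
  destruct (eventually_inv_INR_succ_lt delta Hdelta) as [N HN].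
  exists N. intros m n Hm Hn.
  destruct (Hu m) as [Hum Hhm], (Hu n) as [Hun Hhn].
  destruct (Hdir (u m) (u n) Hum Hun) as [z [Hz [Hmz Hnz]]].
  pose proof (HM z Hz). pose proof (HN m Hm). pose proof (HN n Hn).
  assert (d (u m) z < eps / 2) by (apply Hclose; auto; lra).
  assert (d (u n) z < eps / 2) by (apply Hclose; auto; lra).
  pose proof (Htri (u m) z (u n)). rewrite (Hsym z (u n)) in *. lra.
Qed.

Hypothesis Hcont : metric_continuous d h.

Lemma maximizing_seq_limit_ge M u l :
  (forall n, M - / (INR n + 1) < h (u n)) -> seq_converges_to d u l -> M <= h l.
Proof.
  intros Hu Hconv. destruct Hd as (_ & _ & Hsym & _).
  apply Rnot_lt_le. intro Hlt.
  set (eta := (M - h l) / 3).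
  assert (Heta : 0 < eta) by (unfold eta; lra).
  destruct (Hcont l eta Heta) as [delta [Hdelta Hnear]].
  destruct (Hconv delta Hdelta) as [N1 HN1].
  destruct (eventually_inv_INR_succ_lt eta Heta) as [N0 HN0].
  set (n := Nat.max N0 N1).
  assert (Hinv : / (INR n + 1) < eta) by (apply HN0; unfold n; lia).
  assert (Hdist : d l (u n) < delta) by (rewrite Hsym; apply HN1; unfold n; lia).
  pose proof (Hu n) as Hun.
  apply Hnear, Rabs_def2 in Hdist. unfold eta in *. lra.
Qed.

Hypothesis Hcomplete : complete_metric d.

Lemma directed_argmax_exists (A : S -> Prop) (b : R) :
  (exists x, A x) -> directed le A -> seq_closed d A -> (forall x, A x -> h x <= b) ->
  exists l, A l /\ forall x, A x -> h x <= h l.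
Proof.
  intros Hne Hdir Hclosed Hb.
  destruct (maximizing_sequence h A b Hne Hb) as [M [u [HM Hu]]].
  destruct (Hcomplete u) as [l Hconv].
  { exact (maximizing_seq_cauchy A M u Hdir HM Hu). }
  assert (Hl : A l) by (apply (Hclosed u); [intro n; apply Hu | exact Hconv]).
  assert (M <= h l) by (apply (maximizing_seq_limit_ge M u); [intro n; apply Hu | exact Hconv]).
  exists l. split; [exact Hl|].
  intros x Hx. pose proof (HM x Hx). lra.
Qed.

End Discriminator.

Lemma closed_rel_limit_le {S : Type} (d : S -> S -> R) (le : S -> S -> Prop) u l y :
  is_metric d -> closed_rel d le ->
  (forall n, le (u n) y) -> seq_converges_to d u l -> le l y.
Proof.
  intros (_ & Hd_eq0 & Hsym & _) Hclosed Hu Hconv.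
  apply NNPP. intro Hnot.
  destruct (Hclosed l y Hnot) as [r [Hr Hfar]].
  destruct (Hconv r Hr) as [N HN].
  apply (Hfar (u N) y).
  - rewrite Hsym. apply HN. lia.
  - rewrite (proj2 (Hd_eq0 y y) eq_refl). exact Hr.
  - apply Hu.
Qed.

Lemma below_upper_bounds_seq_closed {S : Type} (d : S -> S -> R) (le : S -> S -> Prop)
  (P : S -> Prop) :
  is_metric d -> closed_rel d le -> seq_closed d (below_upper_bounds le P).
Proof.
  intros Hd Hclosed u l Hu Hconv y Hy.
  apply (closed_rel_limit_le d le u); auto.
  intro n. apply Hu, Hy.
Qed.

Lemma below_upper_bounds_directed {S : Type} (le : S -> S -> Prop) (P : S -> Prop) s :
  (forall a b : S, right_bounded le (pair_set a b) -> exists x, is_join le (pair_set a b) x) ->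
  upper_bound le P s -> directed le (below_upper_bounds le P).
Proof.
  intros Hpair Hs x y Hx Hy.
  destruct (Hpair x y) as [j [Hj_ub Hj_least]].
  { exists s. intros q [-> | ->]; auto. }
  exists j. repeat split.
  - intros u Hu. apply Hj_least. intros q [-> | ->]; auto.
  - apply Hj_ub. left. reflexivity.
  - apply Hj_ub. right. reflexivity.
Qed.

Theorem mainTheorem4 (S : Type) (d : S -> S -> R) (le : S -> S -> Prop) (h : S -> R)
  (Hd : is_metric d) (Hcomplete : complete_metric d)
  (Hle : topological_orientation d le)
  (Hpair : forall a b : S, right_bounded le (pair_set a b) ->
             exists x, is_join le (pair_set a b) x)
  (Hcont : metric_continuous d h) (Hdisc : discriminator d le h) :
  cc_sponge le.
Proof.
  destruct Hle as [_ Hclosed].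
  intros P [p0 Hp0] [s Hs].
  set (L := below_upper_bounds le P).
  assert (HPL : forall p, P p -> L p) by (intros p Hp u Hu; apply Hu, Hp).
  assert (Hdir : directed le L) by exact (below_upper_bounds_directed le P s Hpair Hs).
  assert (Hbound : forall x, L x -> h x <= h s).
  { intros x Hx. apply (discriminator_monotone Hd Hdisc), Hx. exact Hs. }
  destruct (directed_argmax_exists Hd Hdisc Hcont Hcomplete L (h s)
              (ex_intro _ p0 (HPL p0 Hp0)) Hdir
              (below_upper_bounds_seq_closed d le P Hd Hclosed) Hbound)
    as [l [Hl Hmax]].
  exists l. split.
  - intros p Hp. apply (directed_argmax_greatest Hd Hdisc L); auto.
  - exact Hl.
Qed.
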